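(* Let $A$ be a valuation ring with $2\in A^\times$, and let $[u_1,\dots,u_r]$ and $[v_1,\dots,v_s]$ be possibly empty frames in $\mathbb E^n_A$ spanning quadratic submodules $U$ and $V$ respectively. Then $U^\perp\cap V^\perp$ contains a non-singular subspace of dimension at least $n-r-2s$.
   Context: $\mathbb E^n_A=(A^n,q)$, $q(x)=x_1^2+\dots+x_n^2$, $B_q(x,y)=q(x+y)-q(x)-q(y)$. A unit vector is $v$ with $q(v)=1$; a frame is a finite set of unit vectors $w_i$ with $B_q(w_i,w_j)=0$ for $i\neq j$; $S^\perp=\{x:B_q(x,s)=0\ \forall s\in S\}$. A quadratic submodule is a direct summand with restricted form. A non-singular subspace of dimension $d$ means a free $A$-submodule $W$ of rank $d$ such that $x\mapsto B_q(x,-)|_W$ is an isomorphism $W\to\mathrm{Hom}_A(W,A)$. A valuation ring is a domain $A$ with fraction field $K$ such that $x\in A$ or $x^{-1}\in A$ for each $x\in K^\times$. *)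

From HB Require Import structures.
From mathcomp Require Import all_boot all_order all_algebra fraction.
Set Implicit Arguments. Unset Strict Implicit. Unset Printing Implicit Defensive.
Import Order.TTheory GRing.Theory Num.Theory.
Local Open Scope ring_scope.

Definition in_A (A : idomainType) (x : {fraction A}) : Prop :=
  exists a : A, x = @FracField.tofrac A a.

Definition valuation_ring (A : idomainType) : Prop :=
  forall x : {fraction A}, x != 0 -> in_A x \/ in_A x^-1.

(* E^n_A = (A^n, q), vectors are row vectors 'rV[A]_n *)
Definition qform (A : comNzRingType) (n : nat) (x : 'rV[A]_n) : A :=
  \sum_(i < n) (x 0 i) ^+ 2.

Definition Bq (A : comNzRingType) (n : nat) (x y : 'rV[A]_n) : A :=
  qform (x + y) - qform x - qform y.

Definition is_frame (A : comNzRingType) (n k : nat) (w : 'I_k -> 'rV[A]_n) : Prop :=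
  (forall i, qform (w i) = 1) /\ (forall i j, i != j -> Bq (w i) (w j) = 0).

Definition fspan (A : comNzRingType) (n k : nat) (w : 'I_k -> 'rV[A]_n)
  : 'rV[A]_n -> Prop :=
  fun x => exists c : 'I_k -> A, x = \sum_(i < k) c i *: w i.

Definition perp (A : comNzRingType) (n : nat) (S : 'rV[A]_n -> Prop)
  : 'rV[A]_n -> Prop :=
  fun x => forall s, S s -> Bq x s = 0.

Definition free_of_rank (A : comNzRingType) (n d : nat) (W : 'rV[A]_n -> Prop) : Prop :=
  exists w : 'I_d -> 'rV[A]_n,
    (forall c : 'I_d -> A, \sum_(i < d) c i *: w i = 0 -> forall i, c i = 0) /\
    (forall x, W x <-> fspan w x).

Definition linform_on (A : comNzRingType) (n : nat) (W : 'rV[A]_n -> Prop)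
  (f : 'rV[A]_n -> A) : Prop :=
  forall (a : A) x y, W x -> W y -> f (a *: x + y) = a * f x + f y.

(* x |-> B_q(x,-)|_W is an isomorphism W -> Hom_A(W,A): every linear form on W
   is B_q(x,-)|_W for exactly one x in W (linearity of the map is automatic). *)
Definition nonsingular (A : comNzRingType) (n : nat) (W : 'rV[A]_n -> Prop) : Prop :=
  forall f, linform_on W f ->
    (exists x, W x /\ forall y, W y -> Bq x y = f y) /\
    (forall x x', W x -> W x' -> (forall y, W y -> Bq x y = f y) ->
       (forall y, W y -> Bq x' y = f y) -> x = x').

Definition nonsingular_subspace (A : comNzRingType) (n d : nat) (W : 'rV[A]_n -> Prop) : Prop :=
  free_of_rank d W /\ nonsingular W.

(* Over a valuation ring divisibility is total, so A is local and every vector is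
   a multiple of one having a coordinate equal to 1.  Work with any symmetric
   invertible Gram matrix G.  If h has unit norm, some coordinate k of hG is a
   unit, deleting coordinate k identifies h^perp with A^(d-1), and the form stays
   invertible there: each u_i costs one dimension.  A linear form is a multiple of
   the pairing with a vector c0 such that B(c0, e_k) = 1.  If q(c0) is a unit,
   c0^perp costs one dimension; otherwise, as 2 is a unit, e_k or c0 + e_k has
   unit norm, and Gram-Schmidt yields two orthogonal vectors of unit norm whose
   span contains c0: each v_j costs at most two dimensions. *)

From HB Require Import structures.
From mathcomp Require Import all_boot all_order all_algebra fraction.
From mathcomp Require Import ring.
Import GRing.Theory.
Local Open Scope ring_scope.

Set Implicit Arguments.
Unset Strict Implicit.

Lemma valuation_dvd_total (A : idomainType) : valuation_ring A ->
  forall a b : A, (exists t, a = t * b) \/ (exists t, b = t * a).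
Proof.
move=> vA a b.
have [->|a0] := eqVneq a 0; first by left; exists 0; rewrite mul0r.
have [->|b0] := eqVneq b 0; first by right; exists 0; rewrite mul0r.
have ab0 : FracField.tofrac a / FracField.tofrac b != 0.
  by rewrite mulf_neq0 ?invr_eq0 ?tofrac_eq0.
case: (vA _ ab0) => [[t ht]|[t ht]]; [left|right]; exists t; apply/eqP.
  by rewrite -tofrac_eq tofracM -ht divfK ?tofrac_eq0.
by rewrite -tofrac_eq tofracM -ht invfM invrK mulrAC mulVf ?mul1r ?tofrac_eq0.
Qed.

Section BilinearForm.
Variables (A : comNzRingType) (d : nat) (G : 'M[A]_d).

Definition bform (x y : 'rV[A]_d) : A := (x *m G *m y^T) 0 0.

Lemma bformDl x y z : bform (x + y) z = bform x z + bform y z.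
Proof. by rewrite /bform !mulmxDl mxE. Qed.

Lemma bformDr x y z : bform z (x + y) = bform z x + bform z y.
Proof. by rewrite /bform linearD mulmxDr mxE. Qed.

Lemma bformZl a x z : bform (a *: x) z = a * bform x z.
Proof. by rewrite /bform -!scalemxAl mxE. Qed.

Lemma bformZr a x z : bform z (a *: x) = a * bform z x.
Proof. by rewrite /bform linearZ -scalemxAr mxE. Qed.

Lemma bformBl x y z : bform (x - y) z = bform x z - bform y z.
Proof. by rewrite -scaleN1r bformDl bformZl mulN1r. Qed.

Lemma bformBr x y z : bform z (x - y) = bform z x - bform z y.
Proof. by rewrite -scaleN1r bformDr bformZr mulN1r. Qed.

Lemma bform_row m (X : 'M_(m, d)) y i : (X *m G *m y^T) i 0 = bform (row i X) y.
Proof. by rewrite /bform -!row_mul [RHS]mxE. Qed.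

Lemma bform_scalar x y : x *m G *m y^T = (bform x y)%:M.
Proof. exact: mx11_scalar. Qed.

Hypothesis G_sym : G^T = G.

Lemma bformC x y : bform x y = bform y x.
Proof.
have -> : bform x y = (x *m G *m y^T)^T 0 0 by rewrite mxE.
by rewrite !trmx_mul trmxK G_sym mulmxA.
Qed.

Lemma congr_sym d' (C : 'M[A]_(d', d)) : (C *m G *m C^T)^T = C *m G *m C^T.
Proof. by rewrite !trmx_mul trmxK G_sym mulmxA. Qed.

End BilinearForm.

Lemma bform_congr (A : comNzRingType) d d' (G : 'M[A]_d) (C : 'M[A]_(d', d)) a b :
  bform (C *m G *m C^T) a b = bform G (a *m C) (b *m C).
Proof. by rewrite /bform trmx_mul !mulmxA. Qed.

Definition orth_units (A : comUnitRingType) d (G : 'M[A]_d) m (u : 'I_m -> 'rV[A]_d)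
  : Prop :=
  (forall i, bform G (u i) (u i) \is a GRing.unit) /\
  (forall i j, i != j -> bform G (u i) (u j) = 0).

Section KernelBasis.
Variable A : comUnitRingType.

Lemma mul_col'_row' m n p k (X : 'M[A]_(m, n.+1)) (Y : 'M[A]_(n.+1, p)) :
  col' k X *m row' k Y = X *m Y - col k X *m row k Y.
Proof.
apply/matrixP => i j; rewrite !mxE (bigD1_ord k) //= big_ord1 !mxE addrAC subrr add0r.
by apply: eq_bigr => l _; rewrite !mxE.
Qed.

Lemma kernel_basis d (w : 'rV[A]_d.+1) k : w 0 k \is a GRing.unit ->
  exists C : 'M[A]_(d, d.+1), [/\ C *m w^T = 0, col' k C = 1%:M &
    forall m (X : 'M_(m, d.+1)), X *m w^T = 0 -> X = col' k X *m C].
Proof.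
move=> wk.
(* [P] projects onto the kernel of [w] along [e_k]; its row [k] vanishes. *)
pose P : 'M[A]_d.+1 := 1%:M - (w 0 k)^-1 *: (w^T *m delta_mx 0 k).
have deltaw : delta_mx 0 k *m w^T = (w 0 k)%:M.
  by rewrite -rowE [LHS]mx11_scalar !mxE.
have Pw : P *m w^T = 0.
  rewrite mulmxBl mul1mx -scalemxAl -mulmxA deltaw mul_mx_scalar scalerA.
  by rewrite mulVr // scale1r subrr.
have rowP : row k P = 0.
  rewrite rowE mulmxBr mulmx1 -scalemxAr mulmxA deltaw mul_scalar_mx scalerA.
  by rewrite mulVr // scale1r subrr.
exists (row' k P); split.
- by rewrite mul_rowsub_mx Pw; apply/matrixP => i j; rewrite !mxE.
- apply/matrixP => i j; rewrite !mxE (inj_eq (@lift_inj _ k)).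
  by rewrite big_ord1 !mxE [_ == k]eq_sym (negbTE (neq_lift k j)) andbF !mulr0 subr0.
- move=> m X Xw; rewrite mul_col'_row' rowP mulmx0 subr0.
  by rewrite mulmxBr mulmx1 -scalemxAr mulmxA Xw mul0mx scaler0 subr0.
Qed.

Lemma restricted_form_unit d (G : 'M[A]_d.+1) (h : 'rV[A]_d.+1) k (C : 'M_(d, d.+1)) :
  G^T = G -> G \in unitmx -> bform G h h \is a GRing.unit ->
  C *m G *m h^T = 0 -> col' k C = 1%:M ->
  (forall m (X : 'M_(m, d.+1)), X *m G *m h^T = 0 -> X = col' k X *m C) ->
  C *m G *m C^T \in unitmx.
Proof.
move=> Gs Gu hu Ch C1 XC.
(* Projecting the rows of [Z] onto [h^perp] and reading them in the basis [C]
   gives a left inverse of [C G C^T]. *)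
pose Z := row' k (invmx G).
have ZC : Z *m G *m C^T = 1%:M.
  by rewrite !mul_rowsub_mx mulVmx // mul1mx -row'Esub -tr_col' C1 trmx1.
have hC : h *m G *m C^T = 0.
  by apply: trmx_inj; rewrite trmx0 !trmx_mul trmxK Gs mulmxA.
pose pZ := Z - (Z *m G *m h^T) *m ((bform G h h)^-1 *: h).
have pZh : pZ *m G *m h^T = 0.
  rewrite !mulmxBl -!mulmxA -!scalemxAl !mulmxA bform_scalar scale_scalar_mx mulVr //.
  by rewrite mulmx1 subrr.
have pZC : pZ *m G *m C^T = 1%:M.
  by rewrite !mulmxBl ZC -!mulmxA -!scalemxAl (mulmxA h) hC scaler0 !mulmx0 subr0.
have : col' k pZ *m (C *m G *m C^T) = 1%:M by rewrite !mulmxA -XC.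
by case/mulmx1_unit.
Qed.

End KernelBasis.

Section TotalDivisibility.
Variable A : comUnitRingType.
Hypothesis dvd_total : forall a b : A, (exists t, a = t * b) \/ (exists t, b = t * a).

Lemma nonunitD (x y : A) :
  x \isn't a GRing.unit -> y \isn't a GRing.unit -> x + y \isn't a GRing.unit.
Proof.
move=> /negbTE xN /negbTE yN; case: (dvd_total x y) => [[t ->]|[t ->]].
  by rewrite -{2}[y]mul1r -mulrDl unitrM yN andbF.
by rewrite -{1}[x]mul1r -mulrDl unitrM xN andbF.
Qed.

Lemma unit_sum_exists (I : finType) (F : I -> A) :
  \sum_i F i \is a GRing.unit -> exists i, F i \is a GRing.unit.
Proof.
move=> Fu; apply/existsP; apply: contraLR Fu; rewrite negb_exists => /forallP nF.
by apply: (big_ind (fun x => x \isn't a GRing.unit)); [rewrite unitr0|exact: nonunitD|].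
Qed.

Lemma nonunit_mul_sub1_unit (a b : A) : a \isn't a GRing.unit -> a * b - 1 \is a GRing.unit.
Proof.
move=> aN; apply: contraT => abN.
have : a * b + (1 - a * b) \isn't a GRing.unit.
  by apply: nonunitD; rewrite ?unitrM ?(negbTE aN) // -opprB unitrN.
by rewrite addrC subrK unitr1.
Qed.

Lemma nonunit_add2_unit (a b : A) : (2%:R : A) \is a GRing.unit ->
  a \isn't a GRing.unit -> b \isn't a GRing.unit -> a + b + 2%:R \is a GRing.unit.
Proof.
move=> two aN bN; apply: contraT => abN.
have : a + b + 2%:R - (a + b) \isn't a GRing.unit.
  by rewrite nonunitD // unitrN nonunitD.
by rewrite addrAC subrr add0r two.
Qed.

Lemma exists_dvd_all n (F : 'I_n.+1 -> A) : exists k, forall j, exists t, F j = t * F k.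
Proof.
elim: n F => [|n IH] F.
  by exists ord0 => j; exists 1; rewrite ord1 mul1r.
have [k Fk] := IH (fun i => F (lift ord0 i)).
case: (dvd_total (F ord0) (F (lift ord0 k))) => [[t Ft]|[t Ft]].
  exists (lift ord0 k) => j; case: (unliftP ord0 j) => [i ->|->]; first exact: Fk.
  by exists t.
exists ord0 => j; case: (unliftP ord0 j) => [i ->|->]; last by exists 1; rewrite mul1r.
by have [s ->] := Fk i; exists (s * t); rewrite Ft mulrA.
Qed.

Lemma col_primitive_factor d (f : 'cV[A]_d.+1) :
  exists k (c : 'cV[A]_d.+1), c k 0 = 1 /\ f = f k 0 *: c.
Proof.
have [k /fin_all_exists [t ft]] := exists_dvd_all (fun j => f j 0).
exists k, (\col_j if j == k then 1 else t j); rewrite mxE eqxx; split=> //.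
apply/matrixP => i j; rewrite ord1 !mxE.
by case: eqP => [->|_]; rewrite ?mulr1 // mulrC.
Qed.

Lemma orth_complement_unit d (G : 'M[A]_d.+1) (h : 'rV[A]_d.+1) :
  G^T = G -> G \in unitmx -> bform G h h \is a GRing.unit ->
  exists k (C : 'M[A]_(d, d.+1)), [/\ C *m G *m h^T = 0, C *m G *m C^T \in unitmx &
    forall m (X : 'M_(m, d.+1)), X *m G *m h^T = 0 -> X = col' k X *m C].
Proof.
move=> Gs Gu hu.
have orthE m (X : 'M_(m, d.+1)) : X *m G *m h^T = X *m (h *m G)^T.
  by rewrite trmx_mul Gs mulmxA.
have [k wk] : exists k, (h *m G) 0 k \is a GRing.unit.
  move: hu; rewrite /bform mxE => /unit_sum_exists[k].
  by rewrite unitrM => /andP[wk _]; exists k.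
have [C [Cw C1 XC]] := kernel_basis wk.
have XC' m (X : 'M_(m, d.+1)) : X *m G *m h^T = 0 -> X = col' k X *m C.
  by rewrite orthE; apply: XC.
exists k, C; split => //; first by rewrite orthE.
by apply: (restricted_form_unit Gs Gu hu _ C1 XC'); rewrite orthE.
Qed.

Hypothesis two_unit : (2%:R : A) \is a GRing.unit.

Lemma split_plane d (G : 'M[A]_d) (a b : 'rV[A]_d) : G^T = G ->
  bform G a b = 1 -> bform G a a \isn't a GRing.unit ->
  exists h1 h2 t, [/\ bform G h1 h1 \is a GRing.unit, bform G h2 h2 \is a GRing.unit,
    bform G h1 h2 = 0 & a = t *: h1 + h2].
Proof.
move=> Gs ab1 aN.
have ba1 : bform G b a = 1 by rewrite bformC.
pose al := bform G a a; pose be := bform G b b.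
(* The Gram determinant of [(a, h1)] is that of [(a, b)], a unit as [al] is not. *)
have [h1 [h1u det1]] : exists h1, bform G h1 h1 \is a GRing.unit /\
    al * bform G h1 h1 - bform G a h1 ^+ 2 = al * be - 1.
  have [beu|beN] := boolP (be \is a GRing.unit).
    by exists b; rewrite ab1 expr1n.
  exists (a + b); rewrite !bformDl !bformDr ab1 ba1 -/al -/be; split; last by ring.
  have -> : al + 1 + (1 + be) = al + be + 2%:R by ring.
  exact: nonunit_add2_unit.
pose t := bform G a h1 / bform G h1 h1.
have h12 : bform G h1 (a - t *: h1) = 0.
  by rewrite bformBr bformZr [bform G h1 a]bformC // divrK // subrr.
exists h1, (a - t *: h1), t; split => //; last by rewrite addrC subrK.
have det2 : bform G (a - t *: h1) (a - t *: h1) * bform G h1 h1 = al * be - 1.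
  rewrite -det1 bformBl bformZl [bform G h1 _]h12 mulr0 subr0 bformBr bformZr.
  by rewrite /t mulrBl [_ / _ * _ * _]mulrAC divrK // expr2.
have : al * be - 1 \is a GRing.unit by exact: nonunit_mul_sub1_unit.
by rewrite -det2 unitrM => /andP[].
Qed.

Lemma linear_form_orth_units d (G : 'M[A]_d) (f : 'cV[A]_d) : G^T = G -> G \in unitmx ->
  exists m (h : 'I_m -> 'rV[A]_d), [/\ (m <= 2)%N, orth_units G h &
    forall x, (forall i, bform G x (h i) = 0) -> x *m f = 0].
Proof.
case: d G f => [|d] G f Gs Gu.
  exists 0, (fun=> 0); split=> //; first by split; case.
  by move=> x _; rewrite thinmx0 mul0mx.
have [k [c [ck fE]]] := col_primitive_factor f.
pose c0 := (invmx G *m c)^T.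
have c0E x : bform G x c0 = (x *m c) 0 0 by rewrite /bform trmxK mulmxA mulmxK.
have xf x : bform G x c0 = 0 -> x *m f = 0.
  move=> xc; rewrite fE -scalemxAr; apply/matrixP => i j.
  by rewrite !ord1 mxE -c0E xc mulr0 mxE.
have [c0u|c0N] := boolP (bform G c0 c0 \is a GRing.unit).
  exists 1, (fun=> c0); split=> //; first by split=> // i j; rewrite !ord1 eqxx.
  by move=> x /(_ ord0); apply: xf.
have c0e : bform G c0 (delta_mx 0 k) = 1 by rewrite bformC // c0E -rowE mxE.
have [h1 [h2 [t [h1u h2u h12 c0_split]]]] := split_plane Gs c0e c0N.
exists 2, (fun i : 'I_2 => if i == ord0 then h1 else h2); split=> //.
  split; first by move=> i; case: ifP.
  by move=> [[|[|i]] ?] [[|[|j]] ?] //= _; rewrite // bformC.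
move=> x xh; apply: xf.
by rewrite c0_split bformDr bformZr (xh ord0) (xh (lift ord0 ord0)) mulr0 addr0.
Qed.

(* The subspace is the row space of [C]; it is nonsingular iff its Gram matrix
   [C G C^T] is invertible. *)
Definition nonsingular_complement s r := forall d (G : 'M[A]_d)
    (u : 'I_r -> 'rV[A]_d) (f : 'I_s -> 'cV[A]_d),
  G^T = G -> G \in unitmx -> orth_units G u ->
  exists d' (C : 'M[A]_(d', d)), [/\ (d - r - 2 * s <= d')%N, C *m G *m C^T \in unitmx,
    forall i, C *m G *m (u i)^T = 0 & forall j, C *m f j = 0].

Lemma nonsingular_complement00 : nonsingular_complement 0 0.
Proof.
move=> d G u f Gs Gu _; exists d, 1%:M; split=> //; last by case.
- by rewrite muln0 !subn0.
- by rewrite mul1mx trmx1 mulmx1.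
- by case.
Qed.

Lemma nonsingular_complement_unit s r :
  nonsingular_complement s r -> nonsingular_complement s r.+1.
Proof.
move=> IH [|d] G u f Gs Gu [uu uo].
  by have := uu ord0; rewrite [u ord0]thinmx0 /bform !mul0mx mxE unitr0.
have [k [C1 [C1h C1u XC1]]] := orth_complement_unit Gs Gu (uu ord0).
pose G1 := C1 *m G *m C1^T.
pose u1 i := col' k (u (lift ord0 i)).
have uE i : u (lift ord0 i) = u1 i *m C1.
  by apply: XC1; rewrite bform_scalar uo ?neq_lift // raddf0.
have u1_orth : orth_units G1 u1.
  split=> [i|i j ij]; rewrite bform_congr -!uE; first exact: uu.
  by apply: uo; rewrite (inj_eq (@lift_inj _ ord0)).
have [d' [C2 [bound C2u C2u1 C2f]]] :=
  IH _ G1 u1 (fun j => C1 *m f j) (congr_sym Gs C1) C1u u1_orth.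
have C21E m (Y : 'M_(m, d)) : C2 *m C1 *m G *m (Y *m C1)^T = C2 *m G1 *m Y^T.
  by rewrite trmx_mul !mulmxA.
exists d', (C2 *m C1); split.
- by rewrite subSS.
- by rewrite C21E.
- move=> i; case: (unliftP ord0 i) => [i' ->|->]; first by rewrite uE C21E C2u1.
  by rewrite -!mulmxA (mulmxA C1) C1h mulmx0.
- by move=> j; rewrite -mulmxA C2f.
Qed.

Lemma nonsingular_complement_form s :
  (forall r, nonsingular_complement s r) -> nonsingular_complement s.+1 0.
Proof.
move=> IH d G u f Gs Gu _.
have [m [h [m2 horth hf]]] := linear_form_orth_units (f ord0) Gs Gu.
have [d' [C [bound Cu Ch Cf]]] := IH m d G h (fun j => f (lift ord0 j)) Gs Gu horth.
exists d', C; split=> //; last (move=> j; case: (unliftP ord0 j) => [j' ->|->]).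
- apply: leq_trans bound; rewrite subn0 -subnDA leq_sub2l //.
  by rewrite mulnS leq_add2r.
- by case.
- exact: Cf.
apply/row_matrixP => i; rewrite row_mul row0; apply: hf => l.
by rewrite -bform_row Ch mxE.
Qed.

Lemma nonsingular_complementP s r : nonsingular_complement s r.
Proof.
elim: s r => [|s IHs] r; elim: r => [|r IHr]; try exact: nonsingular_complement_unit.
  exact: nonsingular_complement00.
exact: nonsingular_complement_form.
Qed.

End TotalDivisibility.

Lemma qform_bform (A : comNzRingType) n (x : 'rV[A]_n) : qform x = bform 1%:M x x.
Proof.
by rewrite /qform /bform mulmx1 mxE; apply: eq_bigr => i _; rewrite !mxE expr2.
Qed.

Lemma Bq_bform (A : comNzRingType) n (x y : 'rV[A]_n) : Bq x y = 2%:R * bform 1%:M x y.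
Proof.
rewrite /Bq !qform_bform bformDl !bformDr [bform _ y x]bformC ?trmx1 //; ring.
Qed.

Section RowSpace.
Variables (A : comUnitRingType) (n d : nat) (C : 'M[A]_(d, n)).

Definition in_rows (x : 'rV[A]_n) : Prop := exists a : 'rV[A]_d, x = a *m C.

Lemma in_rows_perp k (w : 'I_k -> 'rV[A]_n) :
  (forall i, C *m (w i)^T = 0) -> forall x, in_rows x -> perp (fspan w) x.
Proof.
move=> Cw x [a ->] y [c ->].
have Cy : C *m (\sum_i c i *: w i)^T = 0.
  rewrite linear_sum mulmx_sumr big1 // => i _.
  by rewrite linearZ -scalemxAr Cw scaler0.
by rewrite Bq_bform /bform mulmx1 -mulmxA Cy mulmx0 mxE mulr0.
Qed.

Lemma linform_in_rows f : linform_on in_rows f ->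
  forall b, f (b *m C) = \sum_i b 0 i * f (row i C).
Proof.
move=> lf b.
have rows0 : in_rows 0 by exists 0; rewrite mul0mx.
have rowsD x y : in_rows x -> in_rows y -> in_rows (x + y).
  by move=> [a ->] [a' ->]; exists (a + a'); rewrite mulmxDl.
have rowsZ a x : in_rows x -> in_rows (a *: x).
  by move=> [a' ->]; exists (a *: a'); rewrite scalemxAl.
have f0 : f 0 = 0.
  have := lf 1 0 0 rows0 rows0; rewrite scaler0 addr0 mul1r => e.
  by apply: (@addrI _ (f 0)); rewrite addr0 -e.
rewrite mulmx_sum_row.
suff : in_rows (\sum_i b 0 i *: row i C) /\ f (\sum_i b 0 i *: row i C) =
  \sum_i b 0 i * f (row i C) by case.
apply: (big_ind2 (fun x y => in_rows x /\ f x = y)) => [|x1 y1 x2 y2 [Wx1 <-] [Wx2 <-]|i _].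
- by [].
- by split; [exact: rowsD|rewrite -{1}[x1]scale1r lf // mul1r].
have Wi : in_rows (row i C) by exists (delta_mx 0 i); rewrite rowE.
by split; [exact: rowsZ|rewrite -[_ *: _]addr0 lf // f0 addr0].
Qed.

Hypothesis CCt_unit : C *m C^T \in unitmx.

Lemma in_rows_free : free_of_rank d in_rows.
Proof.
exists (fun i => row i C); split=> [c c0 i|x].
  have cC : (\row_j c j) *m C = 0.
    by rewrite mulmx_sum_row -[RHS]c0; apply: eq_bigr => j _; rewrite mxE.
  have := mulmxK CCt_unit (\row_j c j); rewrite mulmxA cC !mul0mx.
  by move/matrixP/(_ 0 i); rewrite !mxE.
split=> [[a ->]|[c ->]].
  by exists (fun i => a 0 i); rewrite mulmx_sum_row.
by exists (\row_j c j); rewrite mulmx_sum_row; apply: eq_bigr => j _; rewrite mxE.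
Qed.

Lemma in_rows_nonsingular : (2%:R : A) \is a GRing.unit -> nonsingular in_rows.
Proof.
move=> two f lf; pose K := C *m C^T; pose F := \row_i f (row i C).
have BqE a b : Bq (a *m C) (b *m C) = 2%:R * bform K a b.
  by rewrite Bq_bform -bform_congr mulmx1.
split.
  exists ((2%:R^-1 *: (F *m invmx K)) *m C); split; first by eexists.
  move=> y [b ->]; rewrite BqE bformZl mulrA mulrV // mul1r linform_in_rows //.
  rewrite /bform -(mulmxA F) mulVmx // mulmx1 mxE.
  by apply: eq_bigr => i _; rewrite !mxE mulrC.
move=> _ _ [a ->] [a' ->] fa fa'.
have : (a - a') *m K = 0.
  apply/matrixP => i j; rewrite ord1 [RHS]mxE.
  have e : bform K a (delta_mx 0 j) = bform K a' (delta_mx 0 j).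
    by apply: (mulrI two); rewrite -!BqE fa ?fa' //; exists (delta_mx 0 j).
  rewrite mulmxBl [LHS]mxE; move: e; rewrite /bform trmx_delta -!colE !mxE => ->.
  exact: subrr.
move=> /(congr1 (mulmx^~ (invmx K))); rewrite mulmxK // mul0mx.
by move/eqP; rewrite subr_eq0 => /eqP ->.
Qed.

End RowSpace.

Unset Implicit Arguments.
Set Strict Implicit.

Theorem lemma2p9 (A : idomainType) (n r s : nat)
    (u : 'I_r -> 'rV[A]_n) (v : 'I_s -> 'rV[A]_n) :
  valuation_ring A ->
  (2%:R : A) \is a GRing.unit ->
  is_frame u -> is_frame v ->
  exists (d : nat) (W : 'rV[A]_n -> Prop),
    (n - r - 2 * s <= d)%N /\
    (forall x, W x -> perp (fspan u) x /\ perp (fspan v) x) /\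
    nonsingular_subspace d W.
Proof.
move=> vA two [uq uo] _.
have u_orth : orth_units 1%:M u.
  split=> [i|i j ij]; first by rewrite -qform_bform uq unitr1.
  by apply: (mulrI two); rewrite -Bq_bform uo // mulr0.
have [d [C [bound CCt Cu Cv]]] := nonsingular_complementP (valuation_dvd_total vA) two
  (fun j => (v j)^T) (trmx1 _ _) (unitmx1 _ _) u_orth.
rewrite mulmx1 in CCt.
have Cu1 i : C *m (u i)^T = 0 by rewrite -[C]mulmx1 Cu.
exists d, (in_rows C); split=> //; split.
  by move=> x Wx; split; exact: in_rows_perp Wx.
by split; [apply: in_rows_free|apply: in_rows_nonsingular].
Qed.
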